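(* Let $q$ be a prime power, let $A(X) \in \mathbb{F}_q[X]$, and let $$A(X) = \sum_{i \geq 0} A_i(X) \Lambda^i(X), \qquad \deg(A_i) < q \text{ for all } i,$$ be the base-$\Lambda(X)$ expansion of $A(X)$, where $\Lambda(X) = X^q - X$. Then $$\mathsf{pdeg}(A) = \max_{i \geq 0} \deg(A_i).$$
   Context: For $A(X) \in \mathbb{F}_q[X]$, $A^{[\ell]}(X)$ denotes the $\ell$-th Hasse derivative: the coefficient of $Z^\ell$ in the expansion of $A(X+Z)$ as a polynomial in $Z$. The $\ell$-th pseudoderivative is $A_{\langle \ell \rangle}(X) = A^{[\ell]}(X) \bmod \Lambda(X)$ (the unique polynomial of degree at most $q-1$ agreeing with $A^{[\ell]}$ on all of $\mathbb{F}_q$). The pseudodegree is $\mathsf{pdeg}(A) = \max_{\ell \geq 0} \deg(A_{\langle \ell \rangle})$. *)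

From HB Require Import structures.
From mathcomp Require Import all_boot all_order all_algebra.
Set Implicit Arguments. Unset Strict Implicit. Unset Printing Implicit Defensive.
Import Order.TTheory GRing.Theory Num.Theory.
Local Open Scope ring_scope.

(* F is a finite field, q = #|F| (a prime power). *)
Definition Lam (F : finFieldType) : {poly F} := 'X^#|F| - 'X.

(* l-th Hasse derivative: mathcomp's nderivn, p^`N(l), whose i-th coefficient
   is p_(l+i) * C(l+i, l), i.e. the coefficient of Z^l in p(X+Z). *)
Definition hasse (F : finFieldType) (l : nat) (A : {poly F}) : {poly F} := A^`N(l).

Definition pseudoderiv (F : finFieldType) (l : nat) (A : {poly F}) : {poly F} :=
  hasse l A %% Lam F.

Definition degz (R : nzRingType) (p : {poly R}) : int := (size p)%:Z - 1.

Definition is_pdeg (F : finFieldType) (A : {poly F}) (d : int) : Prop :=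
  (forall l : nat, degz (pseudoderiv l A) <= d) /\
  (exists l : nat, degz (pseudoderiv l A) = d).

From mathcomp Require Import all_boot all_order all_algebra all_solvable all_field ring.
Set Implicit Arguments.
Unset Strict Implicit.
Unset Printing Implicit Defensive.
Import Order.TTheory GRing.Theory Num.Theory.
Local Open Scope ring_scope.

(* Hasse derivatives obey the Leibniz rule, and since q is a power of the
   characteristic, every Hasse derivative of positive order of
   Lambda = X^q - X is a constant. Hence (Lambda^i)^[k] = (Lambda^i)_k mod Lambda,
   and for A = sum_i A_i Lambda^i the l-th pseudoderivative is
   sum_i sum_k (Lambda^i)_k A_i^[l-k], of degree at most d = max_i deg A_i.
   Its coefficient of X^d is the l-th coefficient of Q = sum_i (A_i)_d Lambda^i.
   The digits (A_i)_d are not all zero and the powers of the nonconstant Lambda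
   are linearly independent, so Q <> 0, and l = deg Q gives degree exactly d. *)

Section HasseLeibniz.
Variable R : comNzRingType.
Implicit Types p q : {poly R}.

Lemma nderivnMX p n : (p * 'X)^`N(n.+1) = p^`N(n) + p^`N(n.+1) * 'X.
Proof. by have := nderivnMXaddC n p 0; rewrite polyC0 addr0. Qed.

Lemma nderivnM p q l :
  (p * q)^`N(l) = \sum_(k < l.+1) p^`N(k) * q^`N(l - k).
Proof.
elim/poly_ind: p l => [|p c IHp] l.
  by rewrite mul0r raddf0 big1 // => k _; rewrite raddf0 mul0r.
rewrite mulrDl mulrAC nderivnD mul_polyC nderivnZ.
case: l => [|l]; first by rewrite big_ord1 !nderivn0 mulrDl mulrAC mul_polyC.
rewrite nderivnMX !IHp [in X in X * 'X]big_ord_recl [RHS]big_ord_recl.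
rewrite !nderivn0 !subn0.
under [in RHS]eq_bigr => k _ do rewrite /bump /= subSS nderivnMXaddC mulrDl mulrAC.
rewrite big_split /= -mulr_suml -mul_polyC; ring.
Qed.

End HasseLeibniz.

Lemma bin_lt_pchar_nat_0 (R : comNzRingType) n k :
  [pchar R].-nat n -> (0 < k < n)%N -> 'C(n, k)%:R = 0 :> R.
Proof.
move=> charn /andP[k_gt0 lt_kn].
have /(congr1 (coefp k)) : (1 + 'X : {poly R}) ^+ n = 1 + 'X^n.
  by rewrite exprDn_pchar ?expr1n // (eq_pnat _ (pchar_poly R)).
rewrite exprDn /=; under eq_bigr => i _ do rewrite expr1n mul1r -scaler_nat.
rewrite -(poly_def _ (fun i => 'C(n, i)%:R)) coef_poly ltnS (ltnW lt_kn) coefD coef1 coefXn.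
by rewrite gtn_eqF // ltn_eqF // addr0.
Qed.

Lemma finField_pchar_nat (F : finFieldType) : [pchar F].-nat #|F|.
Proof.
have [p _ charFp] := finPcharP F.
rewrite (eq_pnat _ (pcharf_eq charFp)) -cardsT.
exact: abelem_pgroup (fin_ring_pchar_abelem charFp).
Qed.

Lemma size_nderivn (R : nzRingType) (p : {poly R}) n :
  (size p^`N(n) <= size p - n)%N.
Proof. exact: size_poly. Qed.

Lemma coef_nderivn_small (R : nzRingType) (p : {poly R}) n d :
  (size p <= d.+1)%N -> (0 < n)%N -> p^`N(n)`_d = 0.
Proof.
move=> le_p_d n_gt0; rewrite coef_nderivn nth_default ?mul0rn //.
by apply: leq_trans le_p_d _; rewrite addnC -{1}[d]addn0 ltn_add2l.
Qed.

Lemma powers_free (R : idomainType) (m : {poly R}) n (c : nat -> R) :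
  (1 < size m)%N -> \sum_(i < n) c i *: m ^+ i = 0 ->
  forall i, (i < n)%N -> c i = 0.
Proof.
move=> m_gt1 sum0 i lt_in.
have : \poly_(i < n) c i \Po m = 0.
  rewrite poly_def raddf_sum /= -[RHS]sum0; apply: eq_bigr => j _.
  by rewrite comp_polyZ rmorphXn /= comp_polyX.
move/eqP; rewrite comp_poly_eq0 // => /eqP/(congr1 (coefp i)).
by rewrite /= coef_poly lt_in coef0.
Qed.

Section HasseModulus.
Variable K : fieldType.
Implicit Types m p q r : {poly K}.

Definition nderivn_modp_coef m p := forall k, p^`N(k) %% m = (p`_k)%:P.

Lemma modp_polyC m c : (1 < size m)%N -> c%:P %% m = c%:P.
Proof. by move=> m_gt1; rewrite modp_small // (leq_ltn_trans (size_polyC_leq1 c) m_gt1). Qed.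

Variable m : {poly K}.
Hypothesis m_gt1 : (1 < size m)%N.

Lemma nderivn_modp_coef1 : nderivn_modp_coef m 1.
Proof.
by move=> k; rewrite -polyC1 nderivnC coefC; case: k => [|k]; rewrite ?mod0p ?modp_polyC.
Qed.

Lemma nderivn_modp_coefM p q :
  nderivn_modp_coef m p -> nderivn_modp_coef m q -> nderivn_modp_coef m (p * q).
Proof.
move=> Dp Dq k; rewrite nderivnM (big_morph _ (modpD m) (mod0p m)) coefM raddf_sum.
apply: eq_bigr => j _; rewrite -modp_mul Dq mulrC -modp_mul Dp -polyCM.
by rewrite modp_polyC // mulrC.
Qed.

Lemma nderivn_modp_coefX p i : nderivn_modp_coef m p -> nderivn_modp_coef m (p ^+ i).
Proof.
move=> Dp; elim: i => [|i IHi]; first exact: nderivn_modp_coef1.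
by rewrite exprS; apply: nderivn_modp_coefM.
Qed.

Lemma nderivn_modp_mul_small r p l :
  nderivn_modp_coef m p -> (size r < size m)%N ->
  (r * p)^`N(l) %% m = \sum_(k < l.+1) p`_k *: r^`N(l - k).
Proof.
move=> Dp r_small; rewrite mulrC nderivnM (big_morph _ (modpD m) (mod0p m)).
have rN_small k : (size r^`N(k) < size m)%N.
  exact: leq_ltn_trans (size_nderivn r k) (leq_ltn_trans (leq_subr k _) r_small).
apply: eq_bigr => k _; rewrite -modp_mul (modp_small (rN_small _)) mulrC.
rewrite -modp_mul Dp mulrC mul_polyC modp_small //.
exact: leq_ltn_trans (size_scale_leq _ _) (rN_small _).
Qed.

Hypothesis m_nderivn : nderivn_modp_coef m m.
Variables (n : nat) (t : nat -> {poly K}).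
Hypothesis t_small : forall i, (size (t i) < size m)%N.

Lemma nderivn_modp_expansion l :
  (\sum_(i < n) t i * m ^+ i)^`N(l) %% m =
  \sum_(i < n) \sum_(k < l.+1) (m ^+ i)`_k *: (t i)^`N(l - k).
Proof.
rewrite raddf_sum (big_morph _ (modpD m) (mod0p m)); apply: eq_bigr => i _.
by rewrite nderivn_modp_mul_small //; apply: nderivn_modp_coefX.
Qed.

Lemma size_nderivn_modp_expansion l :
  (size ((\sum_(i < n) t i * m ^+ i)^`N(l) %% m)%R <= \max_(i < n) size (t i))%N.
Proof.
rewrite nderivn_modp_expansion (leq_trans (size_sum _ _ _)) //.
apply/bigmax_leqP => i _; apply: leq_trans (size_sum _ _ _) _.
apply/bigmax_leqP => k _; apply: leq_trans (size_scale_leq _ _) _.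
apply: leq_trans (size_nderivn _ _) _; apply: leq_trans (leq_subr _ _) _.
exact: leq_bigmax.
Qed.

Lemma coef_nderivn_modp_expansion l d :
  (forall i : 'I_n, size (t i) <= d.+1)%N ->
  ((\sum_(i < n) t i * m ^+ i)^`N(l) %% m)`_d =
  (\sum_(i < n) (t i)`_d *: m ^+ i)`_l.
Proof.
move=> t_le_d; rewrite nderivn_modp_expansion !coef_sum; apply: eq_bigr => i _.
rewrite coef_sum big_ord_recr /= subnn nderivn0 big1 ?add0r.
  by rewrite !coefZ mulrC.
by move=> k _; rewrite coefZ coef_nderivn_small ?mulr0 // subn_gt0.
Qed.

Lemma size_nderivn_modp_expansion_attained :
  exists l, (\max_(i < n) size (t i) <= size ((\sum_(i < n) t i * m ^+ i)^`N(l) %% m)%R)%N.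
Proof.
set D := (\max_(i < n) size (t i))%N.
have [->|D_gt0] := posnP D; first by exists 0%N.
have [i0 Di0] : {i0 : 'I_n | D = size (t i0)}.
  apply: bigop.eq_bigmax; rewrite card_ord.
  by move: D_gt0; rewrite /D; case: (n) => [|n'] //; rewrite big_ord0.
have Dd : D = D.-1.+1 by rewrite prednK.
set d := D.-1 in Dd.
have ti0_neq0 : (t i0)`_d != 0.
  by rewrite -[d]/(d.+1.-1) -Dd Di0 -lead_coefE lead_coef_eq0 -size_poly_eq0 -Di0 Dd.
pose Q := \sum_(i < n) (t i)`_d *: m ^+ i.
have Q_neq0 : Q != 0.
  apply: contra_neq ti0_neq0 => Q0.
  exact: (powers_free (c := fun i => (t i)`_d) m_gt1 Q0 (ltn_ord i0)).
exists (size Q).-1; rewrite Dd ltnNge; apply: contra Q_neq0 => /leq_sizeP/(_ d (leqnn d)).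
rewrite coef_nderivn_modp_expansion => [/eqP|i]; first by rewrite -lead_coef_eq0.
by rewrite -Dd; apply: leq_bigmax.
Qed.

End HasseModulus.

Section Lambda.
Variable F : finFieldType.

Lemma size_Lam : size (Lam F) = #|F|.+1.
Proof.
by rewrite /Lam size_polyDl ?size_polyXn // size_polyN size_polyX ltnS finNzRing_gt1.
Qed.

Lemma size_Lam_gt1 : (1 < size (Lam F))%N.
Proof. by rewrite size_Lam ltnS ltnW // finNzRing_gt1. Qed.

Lemma coef_Lam k : (Lam F)`_k = (k == #|F|)%:R - (k == 1)%:R.
Proof. by rewrite /Lam coefB coefXn coefX. Qed.

Lemma nderivn_Lam k : (0 < k)%N -> (Lam F)^`N(k) = ((Lam F)`_k)%:P.
Proof.
move=> k_gt0; apply/polyP => i; rewrite coef_nderivn coefC !coef_Lam.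
case: i => [|i]; first by rewrite addn0 binn mulr1n.
rewrite addnS eqSS addn_eq0 (negbTE (lt0n_neq0 k_gt0)) subr0 /=.
have [Dq|] := eqVneq; last by rewrite mul0rn.
by rewrite Dq bin_lt_pchar_nat_0 ?mulr0n ?finField_pchar_nat // k_gt0 -Dq ltnS leq_addr.
Qed.

Lemma nderivn_modp_coef_Lam : nderivn_modp_coef (Lam F) (Lam F).
Proof.
case=> [|k]; last by rewrite nderivn_Lam // modp_polyC // size_Lam_gt1.
by rewrite nderivn0 modpp coef_Lam eq_sym (gtn_eqF (ltnW (finNzRing_gt1 F))) subrr.
Qed.

End Lambda.

Lemma bigmax_degz (R : nzRingType) (s : seq {poly R}) :
  \big[Num.max/(-1)%R]_(p <- s) degz p = (\max_(i < size s) size (s`_i)%R)%N%:Z - 1.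
Proof.
have -> : (\max_(i < size s) size (s`_i)%R = \max_(p <- s) size p)%N.
  by rewrite (big_nth 0) big_mkord.
elim: s => [|p s IHs]; rewrite ?big_nil ?big_cons //= IHs /degz.
have [le_ps|lt_sp] := leqP (size p) (\max_(q <- s) size q).
  by rewrite max_r // lerD2r lez_nat.
by rewrite max_l // lerD2r lez_nat ltnW.
Qed.

Theorem lemma5p3 (F : finFieldType) (A : {poly F}) (s : seq {poly F}) :
  (forall i : nat, (size (s`_i)%R <= #|F|)%N) ->
  A = \sum_(i < size s) s`_i * (Lam F) ^+ i ->
  is_pdeg A (\big[Num.max/(-1)%R]_(p <- s) degz p).
Proof.
move=> s_le_q ->; rewrite bigmax_degz.
have s_small i : (size (s`_i)%R < size (Lam F))%N by rewrite size_Lam ltnS.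
have Lam_gt1 := size_Lam_gt1 F; have Lam_nderivn := nderivn_modp_coef_Lam F.
have size_le :=
  size_nderivn_modp_expansion Lam_gt1 Lam_nderivn (size s) (t := fun i => s`_i) s_small.
have [l size_ge] := size_nderivn_modp_expansion_attained Lam_gt1 Lam_nderivn
  (size s) (t := fun i => s`_i) s_small.
split=> [k|]; first by rewrite /degz lerD2r lez_nat size_le.
by exists l; rewrite /degz; congr (_%:Z - 1); apply/anti_leq; rewrite size_le size_ge.
Qed.
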